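(* Let $U>0$. For an integer $L>\frac{8}{U}$ and real $\Lambda$, let $q_\ell(\Lambda)$, $\ell=1,\dots,L$, denote the unique solution $k\in[(\ell-1)\frac{2\pi}{L},\ell\frac{2\pi}{L}]$ of $\sin k - \Lambda = \frac{U}{4}\cot\left(\frac{kL}{2}\right)$, and for integers $\ell,m$ with $\frac{L}{2}\le m-\ell\le \frac{3L}{2}-1$ let $\xi_{\ell,m}(\Lambda)$ denote the unique positive solution $\xi$ of $$\cos\left(m\frac{\pi}{L} - \frac{q_\ell(\Lambda)}{2}\right)\sinh(\xi) = -\frac{U}{4}\,\frac{\sinh(\xi L)}{\cosh(\xi L) - (-1)^m\cos\left(q_\ell(\Lambda)L/2\right)}.$$ For every integer $L>\frac{8}{U}$ choose integers $\ell_L\in\{1,\dots,L\}$ and $m_L$ with $\frac{L}{2}\le m_L-\ell_L\le\frac{3L}{2}-1$, such that $\lim_{L\to\infty}(m_L-\ell_L)\frac{\pi}{L} = q$ with $\frac{\pi}{2}<q<\frac{3\pi}{2}$. Then $$\lim_{L\to\infty}\xi_{\ell_L,m_L}(\Lambda) = -\operatorname{arsinh}\left(\frac{U}{4\cos(q)}\right)$$ uniformly in $\Lambda\in\mathbb{R}$.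
   Context: This concerns $N=3$ electrons and one down spin on a lattice of length $L$: solutions of the Lieb-Wu equations $e^{ik_jL} = \frac{\Lambda-\sin k_j - iU/4}{\Lambda - \sin k_j + iU/4}$ ($j=1,2,3$), $\prod_j \frac{\Lambda-\sin k_j - iU/4}{\Lambda - \sin k_j + iU/4}=1$, consisting of a $k$-$\Lambda$ two-string $k_{1,2} = q\mp i\xi$ ($\xi>0$) and a real $k_3 = q_\ell(\Lambda)$, where the total momentum condition gives $q = m\frac{\pi}{L} - \frac{q_\ell(\Lambda)}{2}$ and $\xi=\xi_{\ell,m}(\Lambda)$. Under $U>0$, $L>8/U$ and $\frac{L}{2}\le m-\ell\le\frac{3L}{2}-1$ the displayed equation has a unique positive solution for every real $\Lambda$. The result says that these strings are driven to the ideal string positions $\sinh\xi = -U/(4\cos q)$ as $L\to\infty$. *)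

From Stdlib Require Import Reals Lra ZArith ClassicalEpsilon.
Open Scope R_scope.

Definition cotR (x : R) : R := cos x / sin x.

(* Defining property of q_l(Lambda): k in the l-th interval
   [(l-1) 2pi/L, l 2pi/L] solving  sin k - Lambda = U/4 cot(kL/2).
   (At the endpoints cot(kL/2) is undefined, so solutions lie in the interior.) *)
Definition is_q (U : R) (L l : nat) (Lam k : R) : Prop :=
  (INR l - 1) * (2 * PI / INR L) < k < INR l * (2 * PI / INR L) /\
  sin k - Lam = U / 4 * cotR (k * INR L / 2).

(* q_l(Lambda): "the" solution (chosen by Hilbert epsilon; it is the unique
   one whenever the solution is unique, as in the paper). *)
Definition q_sol (U : R) (L l : nat) (Lam : R) : R :=
  epsilon (inhabits 0) (fun k => is_q U L l Lam k).

Definition is_xi (U : R) (L l : nat) (m : Z) (Lam xi : R) : Prop :=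
  0 < xi /\
  cos (IZR m * PI / INR L - q_sol U L l Lam / 2) * sinh xi =
    - (U / 4) * (sinh (xi * INR L) /
        (cosh (xi * INR L) - powerRZ (-1) m * cos (q_sol U L l Lam * INR L / 2))).

Definition xi_sol (U : R) (L l : nat) (m : Z) (Lam : R) : R :=
  epsilon (inhabits 0) (fun xi => is_xi U L l m Lam xi).

From Stdlib Require Import Reals Ranalysis5 Lra ZArith ClassicalEpsilon.
From Coquelicot Require Import Rcomplements Hierarchy.
Open Scope R_scope.

(* Write c = cos(m pi/L - q_l/2) and a = (-1)^m cos(q_l L/2), so |a| <= 1.  The
   equation for xi reads (-c) sinh xi = U/4 h(xi L), where h(s) = sinh s / (cosh s - a)
   satisfies |h(s) - 1| <= 2/s.  Since q_l and xi_{l,m} are picked by choice, only the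
   existence of solutions matters, and both exist by the intermediate value theorem.
   Every positive solution satisfies xi >= min(1/2, U/12) once U L >= 24, hence
   xi L -> oo and (-c) sinh xi -> U/4 uniformly in Lambda.  As q_l lies in the l-th
   interval of length 2 pi/L, the argument of c is within pi/L of (m - l) pi/L, so
   c -> cos q uniformly too; inverting sinh gives the limit. *)

Lemma Rdiv_le_div_cross a b c d : 0 < b -> 0 < d -> a * d <= c * b -> a / b <= c / d.
Proof.
  intros Hb Hd H.
  replace (a / b) with (a * d * / (b * d)) by (field; lra).
  replace (c / d) with (c * b * / (b * d)) by (field; lra).
  apply Rmult_le_compat_r; [left; apply Rinv_0_lt_compat; nra | exact H].
Qed.

Lemma Rdiv_lt_swap a b x : 0 < b -> 0 < x -> a / b < x -> a / x < b.
Proof. intros Hb Hx H; apply Rlt_div_l; [lra|]; rewrite Rmult_comm; now apply Rlt_div_l. Qed.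

Lemma Rdiv_near K C eta : 0 < C -> 0 < eta ->
  exists rho, 0 < rho < C /\
    forall y x, Rabs (y - K) < rho -> Rabs (x - C) < rho -> Rabs (y / x - K / C) < eta.
Proof.
  intros HC Heta.
  set (B := C + Rabs K); assert (HB : C <= B) by (pose proof (Rabs_pos K); unfold B; lra).
  set (rho := Rmin (C / 2) (eta * C ^ 2 / (2 * B))).
  assert (HC2 : 0 < C ^ 2) by (apply pow_lt; lra).
  assert (Hrho : 0 < rho) by (apply Rmin_pos; [lra | apply Rdiv_lt_0_compat; nra]).
  assert (HrhoC : rho <= C / 2) by apply Rmin_l.
  assert (HrhoB : rho * B <= eta * C ^ 2 / 2).
  { replace (eta * C ^ 2 / 2) with (eta * C ^ 2 / (2 * B) * B) by (field; lra).
    apply Rmult_le_compat_r; [lra | apply Rmin_r]. }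
  exists rho; split; [lra|]; intros y x Hy Hx.
  apply Rabs_lt_between in Hx as Hx'.
  replace (y / x - K / C) with (((y - K) * C - K * (x - C)) / (x * C)) by (field; lra).
  rewrite Rabs_div, (Rabs_pos_eq (x * C)) by nra.
  apply Rlt_div_l; [nra|].
  eapply Rle_lt_trans; [apply Rabs_triang|]; rewrite Rabs_Ropp, !Rabs_mult, (Rabs_pos_eq C) by lra.
  pose proof (Rabs_pos K); pose proof (Rabs_pos (y - K)); pose proof (Rabs_pos (x - C)).
  assert (Rabs (y - K) * C + Rabs K * Rabs (x - C) < rho * B) by (unfold B; nra).
  assert (eta * (C ^ 2 / 2) <= eta * (x * C)) by (apply Rmult_le_compat_l; nra).
  lra.
Qed.

Lemma eventually_INR_gt K : eventually (fun L => K < INR L).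
Proof. destruct (INR_unbounded K) as [N HN]; exists N; intros L HL; apply le_INR in HL; lra. Qed.

Lemma sinh_opp x : sinh (- x) = - sinh x.
Proof. unfold sinh; rewrite Ropp_involutive; field. Qed.

Lemma sinh_ge_half x : 0 <= x -> x / 2 <= sinh x.
Proof.
  intros Hx; unfold sinh; rewrite exp_Ropp.
  pose proof (exp_ineq1_le x); pose proof (exp_pos x).
  assert (/ exp x <= 1) by (rewrite <- Rinv_1; apply Rinv_le_contravar; lra).
  lra.
Qed.

Lemma sinh_le_three_halves x : 0 <= x <= 1 / 2 -> sinh x <= 3 / 2 * x.
Proof.
  intros Hx; unfold sinh.
  pose proof (exp_ineq1_le (- x)); pose proof (exp_pos x).
  assert (exp x * exp (- x) = 1) by (rewrite exp_Ropp; field; lra).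
  assert (exp x <= 1 + 2 * x) by nra.
  lra.
Qed.

Lemma sinh_lt_inv x y : sinh x < sinh y -> x < y.
Proof. intros H; rewrite <- (arcsinh_sinh x), <- (arcsinh_sinh y); now apply arcsinh_lt. Qed.

Lemma sinh_inverse_continuous x0 eps : 0 < eps ->
  exists eta, 0 < eta /\
    forall x, Rabs (sinh x - sinh x0) < eta -> Rabs (x - x0) < eps.
Proof.
  intros Heps.
  exists (Rmin (sinh (x0 + eps) - sinh x0) (sinh x0 - sinh (x0 - eps))).
  pose proof (sinh_lt x0 (x0 + eps) ltac:(lra)).
  pose proof (sinh_lt (x0 - eps) x0 ltac:(lra)).
  split; [apply Rmin_pos; lra|].
  intros x Hx; apply Rabs_lt_between in Hx.
  pose proof (Rmin_l (sinh (x0 + eps) - sinh x0) (sinh x0 - sinh (x0 - eps))).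
  pose proof (Rmin_r (sinh (x0 + eps) - sinh x0) (sinh x0 - sinh (x0 - eps))).
  assert (x < x0 + eps) by (apply sinh_lt_inv; lra).
  assert (x0 - eps < x) by (apply sinh_lt_inv; lra).
  apply Rabs_lt_between; lra.
Qed.

Definition hratio (s a : R) : R := sinh s / (cosh s - a).

Lemma hratio_bounds s a : 0 < s -> -1 <= a <= 1 ->
  0 < cosh s - a /\ s / (s + 2) <= hratio s a <= (s + 2) / s.
Proof.
  intros Hs Ha; unfold hratio, sinh, cosh.
  pose proof (exp_ineq1_le s); pose proof (exp_pos s); pose proof (exp_pos (- s)).
  assert (exp s * exp (- s) = 1) by (rewrite exp_Ropp; field; lra).
  set (E := exp s) in *; set (F := exp (- s)) in *.
  assert (HD : 0 < (E + F) / 2 - a) by nra.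
  assert (E * ((E - F) / 2) = (E - 1) * (E + 1) / 2) by nra.
  assert (s * (E + 1) <= (s + 2) * (E - 1)) by nra.
  split; [exact HD | split]; apply Rdiv_le_div_cross; try lra.
  - apply (Rmult_le_reg_l E); [lra|].
    assert (E * ((E + F) / 2 - a) <= (E + 1) ^ 2 / 2) by nra.
    nra.
  - apply (Rmult_le_reg_l E); [lra|].
    assert ((E - 1) ^ 2 / 2 <= E * ((E + F) / 2 - a)) by nra.
    assert (s * ((E - 1) * (E + 1)) <= (s + 2) * (E - 1) ^ 2) by nra.
    nra.
Qed.

Lemma Rabs_hratio_sub_1 s a : 0 < s -> -1 <= a <= 1 -> Rabs (hratio s a - 1) <= 2 / s.
Proof.
  intros Hs Ha; destruct (hratio_bounds s a Hs Ha) as [_ [Hlo Hhi]].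
  replace (s / (s + 2)) with (1 - 2 / (s + 2)) in Hlo by (field; lra).
  replace ((s + 2) / s) with (1 + 2 / s) in Hhi by (field; lra).
  assert (2 / (s + 2) <= 2 / s) by (apply Rdiv_le_div_cross; lra).
  apply Rabs_le_between; lra.
Qed.

Lemma bound_state_exists U L c a :
  0 < U -> 18 < U * L -> 2 <= L -> -1 <= c < 0 -> -1 <= a <= 1 ->
  exists xi, 0 < xi /\ - c * sinh xi = U / 4 * hratio (xi * L) a.
Proof.
  intros HU HUL HL Hc Ha.
  set (G x := - c * sinh x - U / 4 * hratio (x * L) a).
  set (x1 := 1 / L); set (x2 := 1 + U / - c).
  assert (Hx1 : 0 < x1 <= 1 / 2).
  { unfold x1; split; [apply Rdiv_lt_0_compat | apply Rdiv_le_div_cross]; lra. }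
  assert (Hx2 : 1 < x2).
  { unfold x2; pose proof (Rdiv_lt_0_compat U (- c) HU ltac:(lra)); lra. }
  assert (HG : forall x, x1 <= x <= x2 -> continuity_pt G x).
  { intros x Hx; destruct (hratio_bounds (x * L) a ltac:(nra) Ha) as [HD _].
    unfold G, hratio, sinh, cosh in *; reg; lra. }
  assert (G1 : G x1 < 0).
  { unfold G; replace (x1 * L) with 1 by (unfold x1; field; lra).
    destruct (hratio_bounds 1 a ltac:(lra) Ha) as [_ [Hh _]].
    pose proof (sinh_le_three_halves x1 ltac:(lra)); pose proof (sinh_ge_half x1 ltac:(lra)).
    assert (18 * x1 < U).
    { replace (18 * x1) with (18 / L) by (unfold x1; field; lra); apply Rlt_div_l; lra. }
    nra. }
  assert (G2 : 0 < G x2).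
  { unfold G; destruct (hratio_bounds (x2 * L) a ltac:(nra) Ha) as [_ [_ Hh]].
    assert ((x2 * L + 2) / (x2 * L) <= 2) by (apply Rle_div_l; nra).
    pose proof (sinh_ge_half x2 ltac:(lra)).
    assert (- c * x2 = - c + U) by (unfold x2; field; lra).
    nra. }
  destruct (IVT_interv G x1 x2 HG ltac:(lra) G1 G2) as [z [Hz Hz0]].
  exists z; split; [lra|]; unfold G in Hz0; lra.
Qed.

Lemma bound_state_lower_bound U L c a xi :
  0 < U -> 24 <= U * L -> -1 <= c < 0 -> -1 <= a <= 1 -> 0 < xi ->
  - c * sinh xi = U / 4 * hratio (xi * L) a -> Rmin (1 / 2) (U / 12) <= xi.
Proof.
  intros HU HUL Hc Ha Hxi Heq; apply Rnot_lt_le; intros Hsmall.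
  assert (xi < 1 / 2) by (eapply Rlt_le_trans; [exact Hsmall | apply Rmin_l]).
  assert (xi < U / 12) by (eapply Rlt_le_trans; [exact Hsmall | apply Rmin_r]).
  assert (HL : 0 < L) by nra.
  destruct (hratio_bounds (xi * L) a ltac:(nra) Ha) as [_ [Hh _]].
  assert (xi * L <= hratio (xi * L) a * (xi * L + 2)) by (apply Rle_div_l; [nra | exact Hh]).
  pose proof (sinh_le_three_halves xi ltac:(lra)); pose proof (sinh_ge_half xi ltac:(lra)).
  assert (U / 4 * hratio (xi * L) a <= 3 / 2 * xi) by (rewrite <- Heq; nra).
  assert (U / 4 * (xi * L) <= 3 / 2 * xi * (xi * L + 2)).
  { apply Rle_trans with (U / 4 * hratio (xi * L) a * (xi * L + 2)).
    - rewrite Rmult_assoc; apply Rmult_le_compat_l; lra.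
    - apply Rmult_le_compat_r; nra. }
  assert (xi * (xi * L) < U / 12 * (xi * L)) by (apply Rmult_lt_compat_r; nra).
  nra.
Qed.

Lemma bound_state_estimate U L c a xi :
  0 < U -> 24 <= U * L -> -1 <= c < 0 -> -1 <= a <= 1 -> 0 < xi ->
  - c * sinh xi = U / 4 * hratio (xi * L) a ->
  Rabs (- c * sinh xi - U / 4) <= U / (2 * Rmin (1 / 2) (U / 12)) / L.
Proof.
  intros HU HUL Hc Ha Hxi Heq.
  pose proof (bound_state_lower_bound U L c a xi HU HUL Hc Ha Hxi Heq) as Hlow.
  assert (0 < Rmin (1 / 2) (U / 12)) by (apply Rmin_pos; lra).
  assert (HL : 0 < L) by nra.
  rewrite Heq.
  replace (U / 4 * hratio (xi * L) a - U / 4) with (U / 4 * (hratio (xi * L) a - 1)) by ring.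
  rewrite Rabs_mult, (Rabs_pos_eq (U / 4)) by lra.
  eapply Rle_trans; [apply Rmult_le_compat_l; [lra | apply Rabs_hratio_sub_1; [nra | exact Ha]]|].
  replace (U / 4 * (2 / (xi * L))) with (U / 2 / (xi * L)) by (field; nra).
  replace (U / (2 * Rmin (1 / 2) (U / 12)) / L) with (U / 2 / (Rmin (1 / 2) (U / 12) * L))
    by (field; lra).
  apply Rdiv_le_div_cross; nra.
Qed.

Lemma Rabs_cos_sub_le x y : Rabs (cos x - cos y) <= Rabs (x - y).
Proof.
  destruct (MVT_abs cos (fun t => - sin t) y x) as [t [Ht _]].
  { intros; apply derivable_pt_lim_cos. }
  rewrite Ht, Rabs_Ropp; pose proof (SIN_bound t).
  rewrite <- (Rmult_1_l (Rabs (x - y))) at 2.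
  apply Rmult_le_compat_r; [apply Rabs_pos | apply Rabs_le; lra].
Qed.

Lemma cotR_add_INR_PI n z : cotR (INR n * PI + z) = cotR z.
Proof.
  induction n as [|n IHn]; [simpl; f_equal; ring|].
  rewrite S_INR, <- IHn; replace ((INR n + 1) * PI + z) with (INR n * PI + z + PI) by ring.
  unfold cotR; rewrite neg_cos, neg_sin; unfold Rdiv; rewrite Rinv_opp; ring.
Qed.

Lemma bounded_eq_cot_solvable (g : R -> R) (M c : R) :
  continuity g -> (forall u, Rabs (g u) <= M) -> 0 < c ->
  exists z, 0 < z < PI /\ g z * sin z = c * cos z.
Proof.
  intros Hg HM Hc.
  assert (HM0 : 0 <= M) by (eapply Rle_trans; [apply Rabs_pos | apply (HM 0)]).
  set (t := Rmin (1 / 2) (c / (4 * (M + 1)))).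
  assert (Ht : 0 < t <= 1 / 2).
  { split; [apply Rmin_pos; [lra | apply Rdiv_lt_0_compat; lra] | apply Rmin_l]. }
  assert (HtM : (M + 1) * t <= c / 4).
  { rewrite Rmult_comm; apply Rle_div_r; [lra|].
    replace (c / 4 / (M + 1)) with (c / (4 * (M + 1))) by (field; lra); apply Rmin_r. }
  assert (Hsin : 0 < sin t < t).
  { split; [apply sin_gt_0 | apply sin_lt_x]; pose proof PI2_1; lra. }
  assert (Hcos : 1 / 2 <= cos t).
  { pose proof (Rabs_cos_sub_le t 0) as H.
    rewrite cos_0, Rminus_0_r, (Rabs_pos_eq t) in H by lra.
    apply Rabs_le_between in H; lra. }
  set (H u := g u * sin u - c * cos u).
  assert (Hleft : H t < 0).
  { unfold H; pose proof (HM t) as B; apply Rabs_le_between in B; nra. }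
  assert (Hright : 0 < H (PI - t)).
  { unfold H; rewrite sin_PI_x, Rtrigo_facts.cos_pi_minus.
    pose proof (HM (PI - t)) as B; apply Rabs_le_between in B; nra. }
  destruct (IVT H t (PI - t) ltac:(unfold H; reg) ltac:(pose proof PI2_1; lra) Hleft Hright)
    as [z [Hz Hz0]].
  exists z; split; [pose proof PI2_1; lra | unfold H in Hz0; lra].
Qed.

Lemma q_sol_spec U L l Lam : 0 < U -> 0 < INR L -> (1 <= l)%nat ->
  is_q U L l Lam (q_sol U L l Lam).
Proof.
  intros HU HL Hl; unfold q_sol; apply epsilon_spec.
  set (al := (INR l - 1) * (2 * PI / INR L)).
  destruct (bounded_eq_cot_solvable (fun u => sin (al + 2 * u / INR L) - Lam)
              (1 + Rabs Lam) (U / 4)) as [z [Hz Hz0]].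
  - reg.
  - intros u; eapply Rle_trans; [apply Rabs_triang|]; rewrite Rabs_Ropp.
    apply Rplus_le_compat_r, Rabs_le, SIN_bound.
  - lra.
  - exists (al + 2 * z / INR L); split.
    + assert (0 < 2 * z / INR L < 2 * PI / INR L).
      { split; [apply Rdiv_lt_0_compat | apply Rmult_lt_compat_r; [apply Rinv_0_lt_compat |]];
          lra. }
      unfold al; lra.
    + replace ((al + 2 * z / INR L) * INR L / 2) with (INR (l - 1) * PI + z)
        by (rewrite minus_INR by exact Hl; unfold al; simpl; field; lra).
      assert (0 < sin z) by (apply sin_gt_0; lra).
      rewrite cotR_add_INR_PI; unfold cotR.
      apply (Rmult_eq_reg_r (sin z)); [rewrite Hz0; field |]; lra.
Qed.

Definition string_center (U : R) (L l : nat) (m : Z) (Lam : R) : R :=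
  IZR m * PI / INR L - q_sol U L l Lam / 2.

Lemma Rabs_cos_string_center_sub U L l m Lam q : 0 < U -> 0 < INR L -> (1 <= l)%nat ->
  Rabs (cos (string_center U L l m Lam) - cos q)
    < PI / INR L + Rabs ((IZR m - INR l) * PI / INR L - q).
Proof.
  intros HU HL Hl; eapply Rle_lt_trans; [apply Rabs_cos_sub_le|].
  destruct (q_sol_spec U L l Lam HU HL Hl) as [[Hlo Hhi] _].
  set (p := (IZR m - INR l) * PI / INR L).
  assert (Hc : 0 < string_center U L l m Lam - p < PI / INR L).
  { replace (string_center U L l m Lam - p) with (INR l * PI / INR L - q_sol U L l Lam / 2)
      by (unfold string_center, p; field; lra).
    replace ((INR l - 1) * (2 * PI / INR L)) with (2 * (INR l * PI / INR L) - 2 * (PI / INR L))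
      in Hlo by (field; lra).
    replace (INR l * (2 * PI / INR L)) with (2 * (INR l * PI / INR L)) in Hhi by (field; lra).
    lra. }
  replace (string_center U L l m Lam - q) with ((string_center U L l m Lam - p) + (p - q)) by ring.
  eapply Rle_lt_trans; [apply Rabs_triang|]; rewrite (Rabs_pos_eq (_ - p)) by lra; lra.
Qed.

Lemma Rabs_powerRZ_m1 z : Rabs (powerRZ (-1) z) = 1.
Proof.
  destruct z; simpl; [apply Rabs_R1 | apply pow_1_abs |].
  rewrite Rabs_inv, pow_1_abs; apply Rinv_1.
Qed.

Lemma xi_sol_estimate U L l m Lam :
  0 < U -> 24 <= U * INR L -> 2 <= INR L -> cos (string_center U L l m Lam) < 0 ->
  Rabs (- cos (string_center U L l m Lam) * sinh (xi_sol U L l m Lam) - U / 4)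
    <= U / (2 * Rmin (1 / 2) (U / 12)) / INR L.
Proof.
  intros HU HUL HL Hc.
  set (c := cos (string_center U L l m Lam)) in *.
  set (a := powerRZ (-1) m * cos (q_sol U L l Lam * INR L / 2)).
  assert (Hc1 : -1 <= c) by apply COS_bound.
  assert (Ha : -1 <= a <= 1).
  { apply Rabs_le_between; unfold a; rewrite Rabs_mult, Rabs_powerRZ_m1, Rmult_1_l.
    apply Rabs_le, COS_bound. }
  assert (Hxi : is_xi U L l m Lam (xi_sol U L l m Lam)).
  { unfold xi_sol; apply epsilon_spec.
    destruct (bound_state_exists U (INR L) c a HU ltac:(lra) HL ltac:(lra) Ha) as [xi [Hxi Heq]].
    exists xi; split; [exact Hxi|].
    change (c * sinh xi = - (U / 4) * hratio (xi * INR L) a); lra. }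
  set (xi := xi_sol U L l m Lam) in *; destruct Hxi as [Hxi Heq].
  change (c * sinh xi = - (U / 4) * hratio (xi * INR L) a) in Heq.
  apply (bound_state_estimate U (INR L) c a); lra.
Qed.

Theorem mainTheorem6 (U : R) (ell : nat -> nat) (m : nat -> Z) (q : R) :
  0 < U ->
  (forall L : nat, 8 / U < INR L ->
     (1 <= ell L <= L)%nat /\
     INR L / 2 <= IZR (m L) - INR (ell L) <= 3 * INR L / 2 - 1) ->
  (forall eps : R, 0 < eps -> exists N : nat, forall L : nat,
     (N <= L)%nat -> 8 / U < INR L ->
     Rabs ((IZR (m L) - INR (ell L)) * PI / INR L - q) < eps) ->
  PI / 2 < q < 3 * PI / 2 ->
  forall eps : R, 0 < eps -> exists N : nat, forall L : nat,
    (N <= L)%nat -> 8 / U < INR L ->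
    forall Lam : R,
      Rabs (xi_sol U L (ell L) (m L) Lam - (- arcsinh (U / (4 * cos q)))) < eps.
Proof.
  intros HU Hbounds Hconv Hq eps Heps.
  set (C := - cos q).
  assert (HC : 0 < C) by (pose proof (cos_lt_0 q ltac:(lra) ltac:(lra)); unfold C; lra).
  set (xs := - arcsinh (U / (4 * cos q))).
  assert (Hxs : sinh xs = U / 4 / C).
  { unfold xs, C in *; rewrite sinh_opp, sinh_arcsinh; field; lra. }
  destruct (sinh_inverse_continuous xs eps Heps) as [eta [Heta Hinv]].
  destruct (Rdiv_near (U / 4) C eta HC Heta) as [rho [Hrho Hdiv]].
  set (K := U / (2 * Rmin (1 / 2) (U / 12))).
  assert (Hlarge : eventually (fun L =>
    24 / U < INR L /\ 2 < INR L /\ PI / (rho / 2) < INR L /\ K / rho < INR L)).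
  { repeat apply filter_and; apply eventually_INR_gt. }
  destruct (filter_and (F := eventually) _ _ (Hconv (rho / 2) ltac:(lra)) Hlarge) as [N HN].
  exists N; intros L HNL HL Lam.
  destruct (HN L HNL) as [Hp [H24 [H2 [Hpi HK]]]]; specialize (Hp HL).
  destruct (Hbounds L HL) as [[Hl _] _].
  apply Rlt_div_l in H24; [|lra].
  apply Rdiv_lt_swap in Hpi, HK; try lra.
  set (c := cos (string_center U L (ell L) (m L) Lam)).
  assert (Hc : Rabs (- c - C) < rho).
  { replace (- c - C) with (- (c - cos q)) by (unfold C; ring); rewrite Rabs_Ropp.
    eapply Rlt_trans; [apply Rabs_cos_string_center_sub; [lra | lra | exact Hl] | lra]. }
  assert (Hneg : c < 0) by (apply Rabs_lt_between in Hc; lra).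
  pose proof (xi_sol_estimate U L (ell L) (m L) Lam HU ltac:(lra) ltac:(lra) Hneg) as Hest.
  fold c in Hest; set (xi := xi_sol U L (ell L) (m L) Lam) in *.
  apply Hinv; rewrite Hxs.
  replace (sinh xi) with (- c * sinh xi / - c) by (field; lra).
  apply Hdiv; [eapply Rle_lt_trans; [exact Hest | exact HK] | exact Hc].
Qed.
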